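(* Let a WIFS satisfy the $\Phi$-FNC for an iteration rule $\Phi$, and let $\mathcal L$ be a loop class of its transition graph with vertices $v_1,\dots,v_k$. For $1\le i,j\le k$ let $M_{i,j}=\sum_e T(e)$, the sum over all edges $e$ of $\mathcal G$ from $v_i$ to $v_j$ (the zero matrix of the appropriate size if there are none), and let $M=M(\mathcal L)$ be the block matrix $(M_{i,j})_{1\le i,j\le k}$. If the non-negative matrix $M$ is irreducible, then $\mathcal L$ is an irreducible loop class.
   Context: Setting. A weighted iterated function system (WIFS) $(S_i,p_i)_{i\in\mathcal I}$ consists of a finite index set $\mathcal I$, maps $S_i(x)=r_ix+d_i$ on $\mathbb R$ with $0<|r_i|<1$, and probabilities $p_i>0$ with $\sum_i p_i=1$. Its self-similar set $K$ is the unique nonempty compact set with $K=\bigcup_i S_i(K)$ and its self-similar measure $\mu$ is the unique Borel probability measure with $\mu(E)=\sum_i p_i\,\mu(S_i^{-1}(E))$. Standing assumptions: $K$ is not a singleton and its convex hull is $[0,1]$. For a finite word $\sigma=\sigma_1\cdots\sigma_n$ over $\mathcal I$ (the set of all finite words, including the empty word, is $\mathcal I^*$) put $S_\sigma=S_{\sigma_1}\circ\cdots\circ S_{\sigma_n}$, $p_\sigma=p_{\sigma_1}\cdots p_{\sigma_n}$ (identity and $1$ for the empty word). For a map $f$, $f\mu:=\mu\circ f^{-1}$. Iteration rules and net intervals. Fix a total order on the affine bijections $x\mapsto ax+b$ ($a\ne0$) of $\mathbb R$. For a closed interval $J$ let $T_J(x)=rx+c$ ($r>0$) be the map with $T_J([0,1])=J$.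 An iteration rule $\Phi$ assigns to each finite strictly increasing tuple $v=(f_1,\dots,f_m)$ of such maps a tuple $\Phi(v)=(\mathcal C_1,\dots,\mathcal C_m)$ of finite subsets of $\mathcal I^*$ such that for each $i$ and all large $n$ every word of length $n$ has a unique prefix in $\mathcal C_i$. Children of a pair $(\Delta,v)$, $\Delta=[a,b]$: let $\mathcal Y=\{T_\Delta\circ f_i\circ S_\tau:1\le i\le m,\tau\in\mathcal C_i\}$ and list $\{a,b\}\cup\{g(z):g\in\mathcal Y,z\in\{0,1\},g(z)\in\Delta\}$ as $a=y_1<\dots<y_{k+1}=b$; the children are the pairs $(\Delta',v')$ with $\Delta'=[y_j,y_{j+1}]$, $(y_j,y_{j+1})\cap K\ne\emptyset$, and $v'$ the increasing tuple of the distinct maps $T_{\Delta'}^{-1}\circ g$, $g\in\mathcal Y$, $g(K)\cap(y_j,y_{j+1})\ne\emptyset$. Let $\mathcal N_0=\{([0,1],(\mathrm{id}))\}$ and $\mathcal N_{n+1}$ the set of children of members of $\mathcal N_n$; second components are neighbour sets. $\Phi$ must also satisfy: (i) $\max\{r\,\mathrm{diam}\Delta:(\Delta,v)\in\mathcal N_n,(x\mapsto rx+c)\in v\}\to0$; (ii) if $f_1\neq f_2$ lie in a neighbour set then $f_1\circ S_\sigma\ne f_2$ for all $\sigma\in\mathcal I^*$. (Convention: a pair whose only child has the same interval is replaced by that child.) Transition graph. Children and their data depend only on $v$. The transition graph $\mathcal G$ has as vertices the neighbour sets occurring, root $(\mathrm{id})$, and one edge $e$ from $v$ to $v'$ for each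 child $(\Delta',v')$ of a pair $(\Delta,v)$ (distinguished by the relative position of $\Delta'$ in $\Delta$), with transition matrix $T(e)$: for $v=(f_1,\dots,f_m)$, $v'=(g_1,\dots,g_n)$, $\Phi(v)=(\mathcal C_1,\dots,\mathcal C_m)$, $T(e)$ is the $m\times n$ matrix with $T(e)_{i,j}=\frac{f_i\mu((0,1))}{g_j\mu((0,1))}\sum p_\omega$ over $\omega\in\mathcal C_i$ with $T_\Delta\circ f_i\circ S_\omega=T_{\Delta'}\circ g_j$. For a path $\eta=(e_1,\dots,e_n)$, $T(\eta)=T(e_1)\cdots T(e_n)$ and $\|A\|$ = sum of entries. The WIFS satisfies the $\Phi$-FNC if $\mathcal G$ is finite. A loop class is an induced subgraph $\mathcal L$ of $\mathcal G$ that is strongly connected, has at least one edge, and is maximal with these properties. $\mathcal L$ is irreducible if there are a finite set $\mathcal H$ of paths and a constant $C\ge1$ such that for all finite paths $\eta_1,\eta_2$ in $\mathcal L$ there is $\gamma\in\mathcal H$ with $\eta_1\gamma\eta_2$ a path and $C^{-1}\|T(\eta_1)\|\|T(\eta_2)\|\le\|T(\eta_1\gamma\eta_2)\|\le C\|T(\eta_1)\|\|T(\eta_2)\|$. A non-negative square matrix $M$ is irreducible if for all indices $i,j$ there is $n\ge1$ with $(M^n)_{i,j}>0$. *)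

(* Abstract transition graph of a WIFS satisfying the
   Phi-FNC: a finite directed multigraph (vertex type V finite = Phi-FNC),
   each vertex v (a neighbour set) having size d v, and each edge e carrying
   a non-negative transition matrix T e of size d (src e) x d (tgt e).
   Matrices are stored as functions nat -> nat -> R; only the entries with
   row index < d (src e) and column index < d (tgt e) are ever used. *)
From HB Require Import structures.
From mathcomp Require Import all_boot all_order all_algebra.
Set Implicit Arguments. Unset Strict Implicit. Unset Printing Implicit Defensive.
Import Order.TTheory GRing.Theory Num.Theory.
Local Open Scope ring_scope.

Section TransitionGraph.
Variables (R : realFieldType) (V E : finType) (src tgt : E -> V)
  (d : V -> nat) (T : E -> nat -> nat -> R).

Definition adj (e f : E) : bool := tgt e == src f.

Definition is_path (s : seq E) : Prop := s != [::] /\ sorted adj s.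

Definition edge_in (L : {set V}) (e : E) : bool := (src e \in L) && (tgt e \in L).

Definition path_in (L : {set V}) (s : seq E) : Prop := is_path s /\ all (edge_in L) s.

Definition walk_in (L : {set V}) (u w : V) (s : seq E) : Prop :=
  sorted adj s /\ all (edge_in L) s /\
  match s with
  | [::] => u = w
  | e :: p => src e = u /\ tgt (last e p) = w
  end.

Definition strongly_connected (L : {set V}) : Prop :=
  forall u w, u \in L -> w \in L -> exists s, walk_in L u w s.

Definition has_edge (L : {set V}) : Prop := exists e, edge_in L e.

Definition loop_class (L : {set V}) : Prop :=
  [/\ strongly_connected L, has_edge L &
      forall L' : {set V}, L \subset L' -> strongly_connected L' -> has_edge L' ->
        L' = L].

(* T(eta) = T(e_1) ... T(e_n), as a function of (nat) row / column indices *)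
Fixpoint pmat (e : E) (p : seq E) (i j : nat) : R :=
  match p with
  | [::] => T e i j
  | f :: p' => \sum_(k < d (tgt e)) T e i k * pmat f p' k j
  end.

Definition pnorm (s : seq E) : R :=
  match s with
  | [::] => 0
  | e :: p => \sum_(i < d (src e)) \sum_(j < d (tgt (last e p))) pmat e p i j
  end.

Definition irreducible_loop_class (L : {set V}) : Prop :=
  exists (H : seq (seq E)) (C : R), 1 <= C /\
    forall eta1 eta2, path_in L eta1 -> path_in L eta2 ->
      exists2 gamma, gamma \in H &
        [/\ is_path gamma, is_path (eta1 ++ gamma ++ eta2),
            C^-1 * (pnorm eta1 * pnorm eta2) <= pnorm (eta1 ++ gamma ++ eta2) &
            pnorm (eta1 ++ gamma ++ eta2) <= C * (pnorm eta1 * pnorm eta2)].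

(* indices of the block matrix M(L): pairs (v, a) with v in L, a < d v *)
Definition Lidx (L : {set V}) : {set {v : V & 'I_(d v)}} :=
  [set x | tag x \in L].

Definition Mentry (x y : {v : V & 'I_(d v)}) : R :=
  \sum_(e | (src e == tag x) && (tgt e == tag y)) T e (tagged x) (tagged y).

Definition blockM (L : {set V}) : 'M[R]_#|Lidx L| :=
  \matrix_(i, j) Mentry (enum_val i) (enum_val j).

End TransitionGraph.

Definition irreducible_mx (R : realFieldType) (n : nat) (A : 'M[R]_n) : Prop :=
  forall i j : 'I_n, exists k : nat, (0 < k)%N /\ 0 < (A ^+ k) i j.

From HB Require Import structures.
From mathcomp Require Import all_boot all_order all_algebra.
Set Implicit Arguments.
Unset Strict Implicit.
Unset Printing Implicit Defensive.

Import Order.TTheory GRing.Theory Num.Theory.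
Local Open Scope ring_scope.

(* Irreducibility of M(L) provides, for every pair of indices (u, a), (w, b)
   of M(L), a path gamma from u to w with T(gamma)_(a,b) > 0; fix one such
   connector for each of the finitely many pairs.  Given eta1 ending at u and
   eta2 starting at w, take a to be a column of T(eta1) whose sum is at least
   the mean ||T(eta1)|| / d(u), and b a row of T(eta2) whose sum is at least
   ||T(eta2)|| / d(w).  Then
     ||T(eta1 gamma eta2)|| >= T(gamma)_(a,b) ||T(eta1)|| ||T(eta2)|| / (d(u) d(w)),
   while submultiplicativity of the entry-sum norm on non-negative matrices
   gives ||T(eta1 gamma eta2)|| <= ||T(gamma)|| ||T(eta1)|| ||T(eta2)||.  So C
   can be taken as the largest of ||T(gamma)|| and d(u) d(w) / T(gamma)_(a,b)
   over all connectors. *)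

Lemma exists_ge_mean (R : realDomainType) n (F : 'I_n -> R) :
  (0 < n)%N -> exists a, \sum_i F i <= n%:R * F a.
Proof.
move=> n_gt0; have [a _ maxF] := arg_maxP F (isT : predT (Ordinal n_gt0)).
exists a; apply: le_trans (_ : \sum_(i < n) F a <= _).
  by apply: ler_sum => i _; apply: maxF.
by rewrite sumr_const card_ord mulr_natl.
Qed.

Lemma ler_sum_term (R : numDomainType) (I : finType) (P : pred I) (F : I -> R) j :
  (forall i, P i -> 0 <= F i) -> P j -> F j <= \sum_(i | P i) F i.
Proof.
move=> F_ge0 Pj; rewrite (bigD1 j) //= lerDl.
by apply: sumr_ge0 => i /andP[/F_ge0].
Qed.

Lemma sumr_gt0_exists (R : realDomainType) (I : finType) (P : pred I) (F : I -> R) :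
  0 < \sum_(i | P i) F i -> exists2 i, P i & 0 < F i.
Proof.
case: (pickP [pred i | P i && (0 < F i)]) => [i /andP[Pi Fi_gt0] _|no_pos sum_gt0].
  by exists i.
suff : \sum_(i | P i) F i <= 0 by rewrite leNgt sum_gt0.
apply: sumr_le0 => i Pi; rewrite leNgt.
by apply: contraFN (no_pos i) => /= ->; rewrite Pi.
Qed.

Section PathMatrices.
Variables (R : realFieldType) (V E : finType) (src tgt : E -> V)
  (d : V -> nat) (T : E -> nat -> nat -> R).

Local Notation adj := (adj src tgt).
Local Notation pmat := (pmat tgt d T).
Local Notation pnorm := (pnorm src tgt d T).

Definition colsum (e : E) (p : seq E) (k : nat) : R :=
  \sum_(i < d (src e)) pmat e p i k.

Definition rowsum (e : E) (p : seq E) (i : nat) : R :=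
  \sum_(k < d (tgt (last e p))) pmat e p i k.

Lemma sorted_adj_cat e p f q :
  sorted adj ((e :: p) ++ f :: q) =
  [&& sorted adj (e :: p), tgt (last e p) == src f & sorted adj (f :: q)].
Proof. by rewrite /= cat_path. Qed.

Lemma pmat_cat e p f q i j :
  pmat e (p ++ f :: q) i j = \sum_(k < d (tgt (last e p))) pmat e p i k * pmat f q k j.
Proof.
elim: p e i => [//|g p IH] e i /=.
under eq_bigr => k _ do rewrite IH mulr_sumr.
rewrite exchange_big /=; apply: eq_bigr => l _.
by rewrite mulr_suml; apply: eq_bigr => k _; rewrite mulrA.
Qed.

Lemma pnorm_rowsum e p : pnorm (e :: p) = \sum_(i < d (src e)) rowsum e p i.
Proof. by []. Qed.

Lemma pnorm_colsum e p : pnorm (e :: p) = \sum_(k < d (tgt (last e p))) colsum e p k.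
Proof. exact: exchange_big. Qed.

Lemma pnorm_cat e p f q :
  pnorm ((e :: p) ++ f :: q) =
  \sum_(k < d (tgt (last e p))) colsum e p k * rowsum f q k.
Proof.
rewrite /= last_cat /=.
under eq_bigr => i _ do under eq_bigr => j _ do rewrite pmat_cat.
under eq_bigr => i _ do rewrite exchange_big.
rewrite exchange_big; apply: eq_bigr => k _.
by rewrite mulr_suml; apply: eq_bigr => i _; rewrite mulr_sumr.
Qed.

Lemma rowsum_cat e p f q i :
  rowsum e (p ++ f :: q) i =
  \sum_(k < d (tgt (last e p))) pmat e p i k * rowsum f q k.
Proof.
rewrite /rowsum last_cat; under eq_bigr => j _ do rewrite pmat_cat.
by rewrite exchange_big; apply: eq_bigr => k _; rewrite mulr_sumr.
Qed.

Hypothesis T_nonneg :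
  forall e i j, (i < d (src e))%N -> (j < d (tgt e))%N -> 0 <= T e i j.

Lemma pmat_ge0 e p i j : sorted adj (e :: p) ->
  (i < d (src e))%N -> (j < d (tgt (last e p)))%N -> 0 <= pmat e p i j.
Proof.
elim: p e i => [|f p IH] e i /=; first by move=> _; apply: T_nonneg.
move=> /andP[/eqP tgt_e s] i_lt j_lt.
apply: sumr_ge0 => k _; apply: mulr_ge0; first exact: T_nonneg.
by apply: IH; rewrite // -tgt_e.
Qed.

Lemma colsum_ge0 e p k : sorted adj (e :: p) ->
  (k < d (tgt (last e p)))%N -> 0 <= colsum e p k.
Proof. by move=> s k_lt; apply: sumr_ge0 => i _; apply: pmat_ge0. Qed.

Lemma rowsum_ge0 e p i : sorted adj (e :: p) ->
  (i < d (src e))%N -> 0 <= rowsum e p i.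
Proof. by move=> s i_lt; apply: sumr_ge0 => k _; apply: pmat_ge0. Qed.

Lemma pnorm_ge0 e p : sorted adj (e :: p) -> 0 <= pnorm (e :: p).
Proof.
by move=> s; rewrite pnorm_rowsum; apply: sumr_ge0 => i _; apply: rowsum_ge0.
Qed.

Lemma rowsum_le_pnorm e p i : sorted adj (e :: p) ->
  (i < d (src e))%N -> rowsum e p i <= pnorm (e :: p).
Proof.
move=> s i_lt; rewrite pnorm_rowsum.
by apply: (ler_sum_term (j := Ordinal i_lt)) => // k _; apply: rowsum_ge0.
Qed.

Lemma pnorm_cat_le e p f q : sorted adj ((e :: p) ++ f :: q) ->
  pnorm ((e :: p) ++ f :: q) <= pnorm (e :: p) * pnorm (f :: q).
Proof.
rewrite sorted_adj_cat => /and3P[s1 /eqP tgt_e s2].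
rewrite pnorm_cat pnorm_colsum mulr_suml; apply: ler_sum => k _.
by apply: ler_wpM2l; [apply: colsum_ge0 | apply: rowsum_le_pnorm; rewrite -?tgt_e].
Qed.

Lemma pnorm_cat_ge e p f q k : sorted adj ((e :: p) ++ f :: q) ->
  (k < d (tgt (last e p)))%N ->
  colsum e p k * rowsum f q k <= pnorm ((e :: p) ++ f :: q).
Proof.
rewrite sorted_adj_cat => /and3P[s1 /eqP tgt_e s2] k_lt; rewrite pnorm_cat.
apply: (ler_sum_term (j := Ordinal k_lt)) => // l _.
by apply: mulr_ge0; [apply: colsum_ge0 | apply: rowsum_ge0; rewrite -?tgt_e].
Qed.

Lemma rowsum_cat_ge e p f q i k : sorted adj ((e :: p) ++ f :: q) ->
  (i < d (src e))%N -> (k < d (tgt (last e p)))%N ->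
  pmat e p i k * rowsum f q k <= rowsum e (p ++ f :: q) i.
Proof.
rewrite sorted_adj_cat => /and3P[s1 /eqP tgt_e s2] i_lt k_lt; rewrite rowsum_cat.
apply: (ler_sum_term (j := Ordinal k_lt)) => // l _.
by apply: mulr_ge0; [apply: pmat_ge0 | apply: rowsum_ge0; rewrite -?tgt_e].
Qed.

Lemma pnorm_cat3_le e1 p1 g gp e2 p2 :
  sorted adj ((e1 :: p1) ++ (g :: gp) ++ e2 :: p2) ->
  pnorm ((e1 :: p1) ++ (g :: gp) ++ e2 :: p2) <=
  pnorm (g :: gp) * (pnorm (e1 :: p1) * pnorm (e2 :: p2)).
Proof.
move=> s; move: (s); rewrite sorted_adj_cat => /and3P[s1 _ s23].
apply: le_trans (pnorm_cat_le s) _; rewrite mulrCA.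
by apply: ler_wpM2l; [apply: pnorm_ge0 | apply: pnorm_cat_le].
Qed.

Lemma pnorm_cat3_ge e1 p1 g gp e2 p2 a b :
  sorted adj ((e1 :: p1) ++ (g :: gp) ++ e2 :: p2) ->
  (a < d (tgt (last e1 p1)))%N -> (b < d (tgt (last g gp)))%N ->
  colsum e1 p1 a * (pmat g gp a b * rowsum e2 p2 b) <=
  pnorm ((e1 :: p1) ++ (g :: gp) ++ e2 :: p2).
Proof.
move=> s a_lt b_lt; move: (s); rewrite sorted_adj_cat => /and3P[s1 /eqP tgt_e1 s23].
apply: le_trans (pnorm_cat_ge s a_lt); apply: ler_wpM2l; first exact: colsum_ge0.
by apply: rowsum_cat_ge; rewrite // -tgt_e1.
Qed.

Definition links (x y : {v : V & 'I_(d v)}) (e : E) (p : seq E) : Prop :=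
  [/\ sorted adj (e :: p), src e = tag x, tgt (last e p) = tag y
    & 0 < pmat e p (tagged x) (tagged y)].

Definition link_const (x y : {v : V & 'I_(d v)}) (e : E) (p : seq E) : R :=
  Num.max (pnorm (e :: p))
          ((d (tag x) * d (tag y))%:R / pmat e p (tagged x) (tagged y)).

Lemma links_cat x y z e p f q :
  links x y e p -> links y z f q -> links x z e (p ++ f :: q).
Proof.
move=> [s1 src_e tgt_e pos1] [s2 src_f tgt_f pos2].
have s : sorted adj ((e :: p) ++ f :: q).
  by rewrite sorted_adj_cat s1 s2 tgt_e src_f eqxx.
split=> //; rewrite ?last_cat // pmat_cat.
have y_lt : (tagged y < d (tgt (last e p)))%N by rewrite tgt_e.
apply: lt_le_trans (ler_sum_term (j := Ordinal y_lt) _ _) => //=; first exact: mulr_gt0.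
move: s; rewrite sorted_adj_cat => /and3P[_ /eqP tgt_src _] k _.
by apply: mulr_ge0; apply: pmat_ge0; rewrite ?src_e ?tgt_f -?tgt_src.
Qed.

Lemma link_bounds C x y g gp e1 p1 e2 p2 :
  links x y g gp -> link_const x y g gp <= C ->
  sorted adj (e1 :: p1) -> tgt (last e1 p1) = tag x ->
  sorted adj (e2 :: p2) -> src e2 = tag y ->
  pnorm (e1 :: p1) <= (d (tag x))%:R * colsum e1 p1 (tagged x) ->
  pnorm (e2 :: p2) <= (d (tag y))%:R * rowsum e2 p2 (tagged y) ->
  [/\ sorted adj ((e1 :: p1) ++ (g :: gp) ++ e2 :: p2),
      C^-1 * (pnorm (e1 :: p1) * pnorm (e2 :: p2)) <=
        pnorm ((e1 :: p1) ++ (g :: gp) ++ e2 :: p2)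
    & pnorm ((e1 :: p1) ++ (g :: gp) ++ e2 :: p2) <=
        C * (pnorm (e1 :: p1) * pnorm (e2 :: p2))].
Proof.
move=> [sg src_g tgt_g c_gt0].
rewrite /link_const ge_max => /andP[norm_le ratio_le].
move=> s1 tgt1 s2 src2 mean1 mean2.
have s : sorted adj ((e1 :: p1) ++ (g :: gp) ++ e2 :: p2).
  rewrite sorted_adj_cat [sorted adj (_ :: _ ++ _)]sorted_adj_cat.
  by rewrite s1 sg s2 tgt1 src_g tgt_g src2 !eqxx.
have dxy_gt0 : 0 < (d (tag x) * d (tag y))%:R :> R.
  rewrite ltr0n muln_gt0 (leq_ltn_trans (leq0n _) (ltn_ord (tagged x))).
  exact: leq_ltn_trans (leq0n _) (ltn_ord (tagged y)).
have ratio_gt0 := divr_gt0 dxy_gt0 c_gt0.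
have invC_le : C^-1 <= pmat g gp (tagged x) (tagged y) / (d (tag x) * d (tag y))%:R.
  by rewrite -invf_div lef_pV2 ?posrE // (lt_le_trans ratio_gt0).
split=> //.
  apply: le_trans (pnorm_cat3_ge (a := tagged x) (b := tagged y) s _ _);
    rewrite ?tgt1 ?tgt_g //.
  apply: le_trans (ler_pM _ _ invC_le (ler_pM _ _ mean1 mean2)) _.
  - by rewrite invr_ge0 (le_trans (ltW ratio_gt0)).
  - by rewrite mulr_ge0 ?pnorm_ge0.
  - by rewrite pnorm_ge0.
  - by rewrite pnorm_ge0.
  rewrite [(_ * colsum _ _ _) * _]mulrACA -natrM -!mulrA.
  by rewrite mulKf ?gt_eqF // mulrCA.
apply: le_trans (pnorm_cat3_le s) _.
by apply: ler_wpM2r; rewrite // mulr_ge0 ?pnorm_ge0.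
Qed.

Variable L : {set V}.
Local Notation M := (blockM src tgt d T L).

Lemma blockM_ge0 i j : 0 <= M i j.
Proof.
rewrite mxE; apply: sumr_ge0 => e /andP[/eqP src_e /eqP tgt_e].
by apply: T_nonneg; rewrite ?src_e ?tgt_e ltn_ord.
Qed.

Lemma blockM_gt0_links i j :
  0 < M i j -> exists e, links (enum_val i) (enum_val j) e [::].
Proof.
rewrite mxE => /sumr_gt0_exists[e /andP[/eqP src_e /eqP tgt_e] T_gt0].
by exists e.
Qed.

Lemma blockM_exprS_gt0_links k i j :
  0 < (M ^+ k.+1) i j -> exists e p, links (enum_val i) (enum_val j) e p.
Proof.
elim: k i => [|k IH] i.
  by rewrite expr1 => /blockM_gt0_links[e]; exists e, [::].
rewrite exprS mxE => /sumr_gt0_exists[l _ prod_gt0].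
have Mil_gt0 : 0 < M i l.
  rewrite lt_def blockM_ge0 andbT; apply: contraTneq prod_gt0 => ->.
  by rewrite mul0r ltxx.
move: prod_gt0; rewrite pmulr_rgt0 // => /IH[f [q lj]].
have [e li] := blockM_gt0_links Mil_gt0.
by exists e, ([::] ++ f :: q); apply: links_cat lj.
Qed.

Lemma irreducible_blockM_connectors : irreducible_mx M ->
  exists (H : seq (E * seq E)) (C : R), 1 <= C /\
    forall x y, x \in Lidx d L -> y \in Lidx d L ->
      exists2 gp, gp \in H & links x y gp.1 gp.2 /\ link_const x y gp.1 gp.2 <= C.
Proof.
move=> irrM; pose n := #|Lidx d L|.
have /fin_all_exists[gam gamP] (ij : 'I_n * 'I_n) :
    exists gp : E * seq E, links (enum_val ij.1) (enum_val ij.2) gp.1 gp.2.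
  have [[|k] [//= _ /blockM_exprS_gt0_links[e [p lij]]]] := irrM ij.1 ij.2.
  by exists (e, p).
pose K ij := link_const (enum_val ij.1) (enum_val ij.2) (gam ij).1 (gam ij).2.
exists (codom gam), (\big[Num.max/1]_ij K ij).
split=> [|x y x_in y_in]; first exact: bigmax_ge_id.
pose ij := (enum_rank_in x_in x, enum_rank_in x_in y).
exists (gam ij); first exact: codom_f.
have := gamP ij; have := le_bigmax 1 K ij.
by rewrite /K /= !enum_rankK_in.
Qed.

End PathMatrices.

Theorem lemma4p5 (R : realFieldType) (V E : finType) (src tgt : E -> V)
  (d : V -> nat) (T : E -> nat -> nat -> R)
  (d_pos : forall v, (0 < d v)%N)
  (T_nonneg : forall e i j, (i < d (src e))%N -> (j < d (tgt e))%N -> 0 <= T e i j)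
  (L : {set V}) :
  loop_class src tgt L ->
  irreducible_mx (blockM src tgt d T L) ->
  irreducible_loop_class src tgt d T L.
Proof.
(* Only the irreducibility of M(L) is needed: the connectors may leave L. *)
move=> _ /(irreducible_blockM_connectors T_nonneg)[H [C [C_ge1 connectors]]].
exists [seq gp.1 :: gp.2 | gp <- H], C; split=> //.
move=> [|e1 p1] [|e2 p2] [[ne1 s1] /allP inL1] [[ne2 s2] /allP inL2] //.
have u_in : tgt (last e1 p1) \in L by case/andP: (inL1 _ (mem_last e1 p1)).
have w_in : src e2 \in L by case/andP: (inL2 _ (mem_head e2 p2)).
have [a mean1] := exists_ge_mean (fun k : 'I_ _ => colsum src tgt d T e1 p1 k)
  (d_pos (tgt (last e1 p1))).
have [b mean2] :=
  exists_ge_mean (fun k : 'I_ _ => rowsum tgt d T e2 p2 k) (d_pos (src e2)).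
rewrite -pnorm_colsum in mean1; rewrite -pnorm_rowsum in mean2.
have := connectors (Tagged (fun v => 'I_(d v)) a) (Tagged (fun v => 'I_(d v)) b).
rewrite !inE => /(_ u_in w_in)[[g gp] gp_in [lxy K_le]].
have [s lower upper] := link_bounds T_nonneg lxy K_le s1 erefl s2 erefl mean1 mean2.
exists (g :: gp); first exact: (map_f _ gp_in).
by case: lxy => sg _ _ _; split.
Qed.
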